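(* Let $p$ be a prime, $R$ a ring of characteristic $p$, $R[x]$ the polynomial ring in one variable, $a\in R\setminus\{0\}$, and $\phi\in\operatorname{Aut}_RR[x]$ defined by $\phi(x)=x+a$. If $a$ is not a zero-divisor of $R$, then $R[x]^{\phi}=R[x^p-a^{p-1}x]$.
   Context: $R[x]^{\phi}:=\{u\in R[x]\mid\phi(u)=u\}$. *)

From HB Require Import structures.
From mathcomp Require Import all_boot all_order all_algebra.
Set Implicit Arguments. Unset Strict Implicit. Unset Printing Implicit Defensive.
Import GRing.Theory.
Local Open Scope ring_scope.

Definition phi_shift (R : comNzRingType) (a : R) (u : {poly R}) : {poly R} :=
  u \Po ('X + a%:P).

Definition fixed_ring (R : comNzRingType) (a : R) : pred {poly R} :=
  fun u => phi_shift a u == u.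

Definition gen_subalg (R : comNzRingType) (t : {poly R}) : {poly R} -> Prop :=
  fun u => exists r : {poly R}, u = r \Po t.

(** The polynomial t = x^p - a^(p-1) x is monic of degree p and is fixed by
    phi, because (x + a)^p = x^p + a^p in characteristic p.  Conversely, divide
    a fixed u by t: since phi preserves degrees and t is monic, uniqueness of
    the division makes quotient and remainder fixed, so by induction on the
    degree it suffices that fixed polynomials s of degree < p are constant.
    Comparing s(x + a) with its Taylor expansion s + a s' in the second highest
    coefficient gives a * (n s_n) = 0 for n = deg s < p, hence s_n = 0 as a is
    not a zero-divisor and n is invertible modulo p. *)

From HB Require Import structures.
From mathcomp Require Import all_boot all_order all_algebra.
From mathcomp Require Import zify ring.
Set Implicit Arguments. Unset Strict Implicit. Unset Printing Implicit Defensive.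
Import GRing.Theory Pdiv.Ring Pdiv.RingMonic.
Local Open Scope ring_scope.

Lemma pchar_mulrn_eq0 (R : nzRingType) (p m : nat) (x : R) :
  p \in [pchar R] -> (0 < m < p)%N -> x *+ m = 0 -> x = 0.
Proof.
move=> charRp /andP[m_gt0 m_lt_p] xm0.
have p_gt0 : (0 < p)%N := prime_gt0 (pcharf_prime charRp).
have coprime_pm : coprime p m.
  rewrite prime_coprime ?(pcharf_prime charRp) //.
  by apply/negP => /(dvdn_leq m_gt0); lia.
have [k _] := Bezoutr m p_gt0; rewrite gcdnC (eqP coprime_pm) => /dvdnP[j km1].
have : x *+ (1 + k * m) = x by rewrite mulrnDr mulnC mulrnA xm0 mul0rn addr0.
by rewrite km1 mulrnA (mulrn_pchar charRp) => <-.
Qed.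

Section Shift.
Variables (R : comNzRingType) (c : R).

Lemma size_phi_shift_leq (u : {poly R}) : (size (phi_shift c u) <= size u)%N.
Proof.
have [-> | u_neq0] := eqVneq u 0; first by rewrite /phi_shift comp_poly0.
apply: leq_trans (size_comp_poly_leq _ _) _.
by rewrite size_XaddC muln1 prednK // size_poly_gt0.
Qed.

(* u(x + c) = u + c u' up to terms of degree < deg u - 1 (Taylor). *)
Lemma size_phi_shift_taylor (u : {poly R}) :
  (size (phi_shift c u - u - c *: u^`())%R <= (size u).-2)%N.
Proof.
pose E v := phi_shift c v - v - c *: v^`().
change (size (E u) <= (size u).-2)%N.
have E_MXaddC q k : E (q * 'X + k%:P) = E q * 'X + c *: (c *: q^`() + E q).
  rewrite /E /phi_shift comp_poly_MXaddC derivMXaddC !scalerDr -!mul_polyC.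
  by ring.
have E0 : E 0 = 0 by rewrite /E /phi_shift comp_poly0 deriv0 scaler0 !subr0.
elim/poly_ind: u => [|q k IHq]; first by rewrite E0 size_poly0.
rewrite E_MXaddC; have [-> | q_neq0] := eqVneq q 0.
  by rewrite E0 deriv0 !(scaler0, mul0r, add0r) size_poly0.
rewrite size_MXaddC (negPf q_neq0) /=.
apply: leq_trans (size_polyD _ _) _; rewrite geq_max; apply/andP; split.
  have [-> | Eq_neq0] := eqVneq (E q) 0; first by rewrite mul0r size_poly0.
  rewrite size_mulX //; move: IHq (size_poly_gt0 (E q)); rewrite Eq_neq0.
  by move: (size (E q)) (size q) => m n; lia.
apply: leq_trans (size_scale_leq _ _) _.
apply: leq_trans (size_polyD _ _) _.
rewrite geq_max (leq_trans IHq (leq_pred _)) andbT.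
by apply: leq_trans (size_scale_leq _ _) _; apply: size_poly.
Qed.

Lemma phi_shift_fixed_size_le1 (p : nat) (s : {poly R}) :
  p \in [pchar R] -> (forall b : R, c * b = 0 -> b = 0) ->
  phi_shift c s = s -> (size s <= p)%N -> (size s <= 1)%N.
Proof.
move=> charRp c_reg s_fixed s_le_p; rewrite leqNgt; apply/negP => s_gt1.
have := size_phi_shift_taylor s; rewrite s_fixed subrr sub0r size_polyN.
move=> /(nth_default 0); rewrite coefZ coef_deriv.
have -> : (size s).-2.+1 = (size s).-1 by lia.
rewrite -lead_coefE => /c_reg lead_m0.
have : lead_coef s = 0 by apply: pchar_mulrn_eq0 charRp _ lead_m0; lia.
by move/eqP; rewrite lead_coef_eq0 => /eqP s0; move: s_gt1; rewrite s0 size_poly0.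
Qed.

Variable t : {poly R}.
Hypotheses (t_monic : t \is monic) (t_fixed : phi_shift c t = t).

Lemma phi_shift_fixed_divp (u : {poly R}) : phi_shift c u = u ->
  exists d s : {poly R},
    [/\ u = d * t + s, phi_shift c d = d, phi_shift c s = s
       & (size s < size t)%N].
Proof.
move=> u_fixed; exists (rdivp u t), (rmodp u t).
have s_lt_t : (size (rmodp u t) < size t)%N by rewrite ltn_rmodp monic_neq0.
have shift_s_lt_t : (size (phi_shift c (rmodp u t)) < size t)%N.
  exact: leq_ltn_trans (size_phi_shift_leq _) s_lt_t.
have u_eq : u = phi_shift c (rdivp u t) * t + phi_shift c (rmodp u t).
  by rewrite -{1}u_fixed {1}(rdivp_eq t_monic u) /phi_shift comp_polyD comp_polyM
     -/(phi_shift c t) t_fixed.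
split=> //; first exact: rdivp_eq.
- by rewrite {2}u_eq rdivp_addl_mul_small.
- by rewrite {2}u_eq rmodp_addl_mul_small.
Qed.

Lemma phi_shift_fixed_gen_subalg :
  (1 < size t)%N ->
  (forall s, phi_shift c s = s -> (size s < size t)%N -> (size s <= 1)%N) ->
  forall u, phi_shift c u = u -> gen_subalg t u.
Proof.
move=> t_gt1 fixed_const u; have [n] := ubnP (size u); elim: n u => // n IHn u.
rewrite ltnS => u_le_n /phi_shift_fixed_divp[d [s [u_eq d_fixed s_fixed s_lt_t]]].
have s_const := size1_polyC (fixed_const s s_fixed s_lt_t).
have [d0 | d_neq0] := eqVneq d 0.
  by exists (s`_0)%:P; rewrite comp_polyC u_eq d0 mul0r add0r.
have [|r d_eq] := IHn d _ d_fixed.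
  have : size u = (size d + size t).-1.
    rewrite u_eq size_polyDl size_Mmonic //.
    by have := size_poly_gt0 d; rewrite d_neq0; lia.
  lia.
by exists (r * 'X + (s`_0)%:P); rewrite comp_poly_MXaddC -d_eq u_eq -s_const.
Qed.

End Shift.

Section ArtinSchreier.
Variables (p : nat) (R : comNzRingType) (a : R).
Hypothesis charRp : p \in [pchar R].

Definition artin_schreier : {poly R} := 'X^p - (a ^+ p.-1) *: 'X.

Let p_gt1 : (1 < p)%N := prime_gt1 (pcharf_prime charRp).

Let size_scaleX_lt : (size (- (a ^+ p.-1 *: 'X)) < size ('X^p : {poly R}))%N.
Proof.
by rewrite size_polyN size_polyXn; apply: leq_ltn_trans (size_scale_leq _ _) _;
   rewrite size_polyX ltnS.
Qed.

Lemma size_artin_schreier : size artin_schreier = p.+1.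
Proof. by rewrite size_polyDl // size_polyXn. Qed.

Lemma artin_schreier_monic : artin_schreier \is monic.
Proof. by apply/monicP; rewrite lead_coefDl // lead_coefXn. Qed.

Lemma phi_shift_artin_schreier : phi_shift a artin_schreier = artin_schreier.
Proof.
have charPp : p \in [pchar {poly R}] by rewrite pchar_poly.
have frobD := pFrobenius_autD_comm charPp (mulrC 'X a%:P).
rewrite !pFrobenius_autE in frobD.
rewrite /phi_shift /artin_schreier comp_polyB comp_Xn_poly frobD comp_polyZ.
rewrite comp_polyX -polyC_exp.
have -> : a ^+ p = a ^+ p.-1 * a by rewrite -exprSr prednK // ltnW.
by rewrite polyCM scalerDr -!mul_polyC; ring.
Qed.

End ArtinSchreier.

Theorem lemma2p4 (p : nat) (R : comNzRingType) (a : R) :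
  prime p -> p \in [pchar R] -> a != 0 ->
  (forall b : R, a * b = 0 -> b = 0) ->
  forall u : {poly R},
    u \in fixed_ring a <->
    gen_subalg ('X^p - (a ^+ p.-1) *: 'X) u.
Proof.
move=> _ charRp _ a_reg u; rewrite unfold_in /fixed_ring.
have t_fixed := phi_shift_artin_schreier a charRp.
split=> [/eqP | [r ->]].
- apply: (phi_shift_fixed_gen_subalg (artin_schreier_monic a charRp) t_fixed).
    by rewrite size_artin_schreier // ltnS prime_gt0 // (pcharf_prime charRp).
  move=> s s_fixed; rewrite size_artin_schreier // ltnS.
  exact: phi_shift_fixed_size_le1 charRp a_reg s_fixed.
- by rewrite /phi_shift -comp_polyA -/(phi_shift a _) t_fixed.
Qed.
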